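(* Let $(G,L_G)$ be a labeled graph presenting a sofic shift $Y=L_G(X_G)$. Then the future cover $(\mathbb K(Y),L_{\mathbb K(Y)})$ of $Y$ is isomorphic, as a labeled graph, to the merged graph $([\underline{G}],L_{[\underline{G}]})$ of $(\underline{G},L_{\underline{G}})$, via the map $F(y)\mapsto f_{\underline{G}}(D^y)$ on vertices.
   Context: A labeled graph $(G,L_G)$: finite directed graph (vertices $V_G$, edges $E_G$, source/terminal maps $s_G,t_G$) without sinks or sources, labeling $L_G:E_G\to A$, edge shift $X_G$, presenting $Y=L_G(X_G)$. For a labeled graph $(H,L_H)$ and vertex $v$, $f_H(v)=\{L_H(x): x$ a right-infinite path starting at $v\}$. Construction of $\underline{G}$: for a non-empty $D\subseteq V_G$ and $a\in A$ let $[D,a]=\{t_G(e): e\in E_G, s_G(e)\in D, L_G(e)=a\}$. For $y\in Y$ let $D^y$ be the set of terminal vertices of left-infinite paths $x=\cdots x_{-2}x_{-1}$ in $G$ with $L_G(x)=y_{(-\infty,-1]}$. The labeled graph $(\underline{G},L_{\underline{G}})$ has vertex set $\{D^y: y\in Y\}$, and for each vertex $D$ and each $a\in A$ with $[D,a]\neq\emptyset$ one edge $(D,a)$ from $D$ to $[D,a]$ labeled $a$. Merged graph of a labeled graph $(H,L_H)$: vertices are the distinct sets $f_H(v)$, $v\in V_H$; there is an edge labeled $a$ from $f_H(v)$ to $f_H(w)$ when there are vertices $v',w'$ with $f_H(v')=f_H(v)$, $f_H(w')=f_H(w)$ and an edge labeled $a$ from $v'$ to $w'$ in $H$ (one edge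 per such pair and label). Future cover: for $y\in Y$ let $F(y)=\{w\in Y[0,\infty): y_{(-\infty,-1]}w\in Y\}$ with $Y[0,\infty)=\{y_{[0,\infty)}:y\in Y\}$; $(\mathbb K(Y),L_{\mathbb K(Y)})$ has vertices the distinct sets $F(y)$ and an edge labeled $a$ from $F(y)$ to $F(z)$ exactly when $F(z)=\{w\in A^{\mathbb N}: aw\in F(y)\}$ (one edge per such pair and label). *)

From mathcomp Require Import all_boot.
From Stdlib Require Import ZArith.

Set Implicit Arguments.
Unset Strict Implicit.
Unset Printing Implicit Defensive.

Record lgraph (A : Type) := LGraph {
  lvert : Type;
  ledge : Type;
  lsrc : ledge -> lvert;
  ltgt : ledge -> lvert;
  llab : ledge -> A }.

Definition rseq (A : Type) := nat -> A.

Definition rpath_from (A : Type) (H : lgraph A) (v : lvert H)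
    (x : nat -> ledge H) : Prop :=
  lsrc (x 0%N) = v /\ forall n : nat, ltgt (x n) = lsrc (x n.+1).

Definition follower (A : Type) (H : lgraph A) (v : lvert H) : rseq A -> Prop :=
  fun w => exists x : nat -> ledge H, rpath_from v x /\ forall n, w n = llab (x n).

Definition merged_vert (A : Type) (H : lgraph A) :=
  { S : rseq A -> Prop | exists v : lvert H, S = follower v }.

Definition merged_edge (A : Type) (H : lgraph A) :=
  { p : merged_vert H * A * merged_vert H |
    exists e : ledge H,
      follower (lsrc e) = sval p.1.1 /\ follower (ltgt e) = sval p.2 /\
      llab e = p.1.2 }.

Definition merged (A : Type) (H : lgraph A) : lgraph A :=
  @LGraph A (merged_vert H) (merged_edge H)
    (fun e => (sval e).1.1) (fun e => (sval e).2) (fun e => (sval e).1.2).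

Definition lgraph_iso (A : Type) (H1 H2 : lgraph A)
    (phiV : lvert H1 -> lvert H2) (phiE : ledge H1 -> ledge H2) : Prop :=
  bijective phiV /\ bijective phiE /\
  (forall e, lsrc (phiE e) = phiV (lsrc e)) /\
  (forall e, ltgt (phiE e) = phiV (ltgt e)) /\
  (forall e, llab (phiE e) = llab e).

Section G.
Variables (A V E : finType) (s t : E -> V) (L : E -> A).

Definition no_sinks : Prop := forall v : V, exists e : E, s e = v.
Definition no_sources : Prop := forall v : V, exists e : E, t e = v.

Definition asG : lgraph A := @LGraph A V E s t L.

Definition edge_shift (x : Z -> E) : Prop :=
  forall i : Z, t (x i) = s (x (i + 1)%Z).

Definition sofic (y : Z -> A) : Prop :=
  exists x : Z -> E, edge_shift x /\ forall i : Z, y i = L (x i).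

Definition follow_set (D : V -> Prop) (a : A) : V -> Prop :=
  fun v => exists e : E, D (s e) /\ L e = a /\ t e = v.

(* D^y : terminal vertices of left-infinite paths labeled y_(-oo,-1].
   A left-infinite path ... x_{-2} x_{-1} is encoded by x : nat -> E with
   x k = x_{-(k+1)}. *)
Definition Dy (y : Z -> A) : V -> Prop :=
  fun v => exists x : nat -> E,
    (forall k : nat, t (x k.+1) = s (x k)) /\
    (forall k : nat, L (x k) = y (- Z.of_nat k.+1)%Z) /\
    t (x 0%N) = v.

Definition ul_vert := { D : V -> Prop | exists y, sofic y /\ D = Dy y }.

Definition ul_edge :=
  { p : ul_vert * A * ul_vert |
    (exists v, follow_set (sval p.1.1) p.1.2 v) /\
    sval p.2 = follow_set (sval p.1.1) p.1.2 }.

Definition ulG : lgraph A :=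
  @LGraph A ul_vert ul_edge
    (fun e => (sval e).1.1) (fun e => (sval e).2) (fun e => (sval e).1.2).

Definition Yplus (w : rseq A) : Prop :=
  exists y, sofic y /\ forall n : nat, w n = y (Z.of_nat n).

Definition concat_past (y : Z -> A) (w : rseq A) : Z -> A :=
  fun i => if (i <? 0)%Z then y i else w (Z.to_nat i).

Definition future (y : Z -> A) : rseq A -> Prop :=
  fun w => Yplus w /\ sofic (concat_past y w).

Definition rcons_seq (a : A) (w : rseq A) : rseq A :=
  fun n => match n with O => a | S n' => w n' end.

Definition K_vert := { S : rseq A -> Prop | exists y, sofic y /\ S = future y }.

Definition K_edge :=
  { p : K_vert * A * K_vert |
    sval p.2 = (fun w => sval p.1.1 (rcons_seq p.1.2 w)) }.

Definition futureCover : lgraph A :=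
  @LGraph A K_vert K_edge
    (fun e => (sval e).1.1) (fun e => (sval e).2) (fun e => (sval e).1.2).

End G.

From mathcomp Require Import all_boot zify.
From Stdlib Require Import ZArith Lia.
From Stdlib Require Import FunctionalExtensionality PropExtensionality.
From Stdlib Require Import Classical ClassicalEpsilon.

Set Implicit Arguments.
Unset Strict Implicit.
Unset Printing Implicit Defensive.

(* The key fact is that in the graph underline G the follower set of D^y is exactly
   the future F(y).  A path of underline G labelled w from D^y is a chain of nonempty
   sets D_(n+1) = [D_n, w_n]; tracing back from D_m shows that every prefix of w is
   spelled in G from some vertex of D^y, and Koenig's lemma (pigeonhole over the
   finite vertex and edge sets) yields one vertex of D^y with an infinite path of G
   labelled w, which glued to a left-infinite path presenting y_(-oo,-1] shows that
   y_(-oo,-1] w lies in Y.  Conversely, if z = y_(-oo,-1] w lies in Y, the sets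
   D^(sigma^n z) form a path labelled w because D^(sigma z) = [D^z, z_0].  So both
   graphs have the same vertex sets, and since underline G is deterministic the
   follower set of the target of an a-edge is the a-derivative of the follower set of
   its source, which is the edge relation of K(Y). *)

Lemma sig_eq (T : Type) (P : T -> Prop) (p q : {x | P x}) : sval p = sval q -> p = q.
Proof. by apply: eq_sig_hprop => x; apply: proof_irrelevance. Qed.

Lemma pred_ext (T : Type) (P Q : T -> Prop) : (forall x, P x <-> Q x) -> P = Q.
Proof.
by move=> PQ; apply: functional_extensionality => x; apply: propositional_extensionality.
Qed.

Lemma fin_forall_exists_antitone (T : finType) (P : T -> nat -> Prop) :
  (forall x m n, n <= m -> P x m -> P x n) ->
  (forall m, exists x, P x m) -> exists x, forall m, P x m.
Proof.
move=> P_anti P_ex; apply: NNPP => noP.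
have fails x : exists m, ~ P x m.
  by apply: not_all_ex_not => Px; apply: noP; exists x.
have [M failsM] : exists M, forall x, x \in enum T -> ~ P x M.
  elim: (enum T) => [|x xs [M failsM]]; first by exists 0.
  have [m notPxm] := fails x.
  exists (maxn M m) => y /predU1P [-> | y_xs] PyM.
  - by apply: notPxm; apply: (P_anti _ _ _ _ PyM); rewrite leq_maxr.
  - by apply: (failsM y y_xs); apply: (P_anti _ _ _ _ PyM); rewrite leq_maxl.
have [x PxM] := P_ex M.
by apply: (failsM x); rewrite ?mem_enum.
Qed.

Lemma follower_cons (A : finType) (H : lgraph A) :
  (forall e e' : ledge H, lsrc e = lsrc e' -> llab e = llab e' -> ltgt e = ltgt e') ->
  forall e : ledge H,
  follower (ltgt e) = (fun w => follower (lsrc e) (rcons_seq (llab e) w)).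
Proof.
move=> deterministic e; apply: pred_ext => w; split.
- move=> [x [[x0 xp] xl]].
  exists (fun n => if n is n'.+1 then x n' else e).
  by split; [split=> // -[|n] /= | case].
- move=> [x [[x0 xp] xl]].
  have tgt_x0 : ltgt (x 0) = ltgt e by apply: deterministic; last exact: (esym (xl 0)).
  by exists (fun n => x n.+1); split; [split=> //; rewrite -xp | move=> n; exact: (xl n.+1)].
Qed.

Section PresentedShift.
Variables (A V E : finType) (s t : E -> V) (L : E -> A).

Local Notation sofic := (sofic s t L).
Local Notation Dy := (Dy s t L).
Local Notation future := (future s t L).
Local Notation follow_set := (follow_set s t L).
Local Notation G := (asG s t L).

Lemma concat_past_neg (y : Z -> A) (w : rseq A) (i : Z) :
  (i < 0)%Z -> concat_past y w i = y i.
Proof. by rewrite /concat_past => /Z.ltb_lt ->. Qed.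

Lemma concat_past_nat (y : Z -> A) (w : rseq A) (n : nat) :
  concat_past y w (Z.of_nat n) = w n.
Proof.
rewrite /concat_past; have /Z.ltb_ge -> : (0 <= Z.of_nat n)%Z by lia.
by rewrite Nat2Z.id.
Qed.

Lemma concat_past_split (y : Z -> A) : concat_past y (fun n => y (Z.of_nat n)) = y.
Proof.
apply: functional_extensionality => i; rewrite /concat_past.
by case: Z.ltb_spec => // i_ge0; rewrite Z2Nat.id.
Qed.

Lemma sofic_shift (z : Z -> A) (k : Z) : sofic z -> sofic (fun i => z (i + k)%Z).
Proof.
move=> [x [x_shift zx]]; exists (fun i => x (i + k)%Z); split=> // i.
by rewrite x_shift; congr (s (x _)); lia.
Qed.

Lemma futureE (y : Z -> A) (w : rseq A) : future y w <-> sofic (concat_past y w).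
Proof.
split=> [[] // | yw]; split=> //.
by exists (concat_past y w); split=> // n; rewrite concat_past_nat.
Qed.

Lemma future_nonempty (y : Z -> A) : sofic y -> exists w, future y w.
Proof. by move=> sofic_y; exists (fun n => y (Z.of_nat n)); rewrite futureE concat_past_split. Qed.

Lemma Dy_nonempty (z : Z -> A) : sofic z -> exists v, Dy z v.
Proof.
move=> [x [x_shift zx]]; exists (t (x (-1)%Z)), (fun k => x (- Z.of_nat k.+1)%Z).
split; last by split=> // k; rewrite zx.
by move=> k; rewrite x_shift; congr (s (x _)); lia.
Qed.

Lemma Dy_eq_past (y1 y2 : Z -> A) :
  (forall i, (i < 0)%Z -> y1 i = y2 i) -> Dy y1 = Dy y2.
Proof.
move=> past_eq; apply: pred_ext => v.
by split=> -[x [x_path [xl xv]]]; exists x; split=> //; split=> // k;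
  rewrite xl ?past_eq //; lia.
Qed.

Lemma Dy_shift (z : Z -> A) : Dy (fun i => z (i + 1)%Z) = follow_set (Dy z) (z 0%Z).
Proof.
apply: pred_ext => v; split.
- move=> [x [x_path [xl xv]]]; exists (x 0); split; last by rewrite xl.
  exists (fun k => x k.+1); split=> //; split=> [k|]; last exact: x_path.
  by rewrite xl; congr z; lia.
- move=> [e [[x [x_path [xl xv]]] [le te]]].
  exists (fun k => if k is k'.+1 then x k' else e).
  split=> [[|k] //|]; split=> // -[|k]; cbv beta iota; first by rewrite le; congr z; lia.
  by rewrite xl; congr z; lia.
Qed.

Fixpoint spells (w : rseq A) (n m : nat) (v : V) : Prop :=
  if m is m'.+1 then exists e, [/\ s e = v, L e = w n & spells w n.+1 m' (t e)]
  else True.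

Lemma spells_antitone (w : rseq A) (m m' n : nat) (v : V) :
  m' <= m -> spells w n m v -> spells w n m' v.
Proof.
elim: m m' n v => [|m IHm] [|m'] n v //= le_m'm [e [se le spells_e]].
by exists e; split=> //; apply: IHm spells_e.
Qed.

Lemma spells_of_follow_sets (w : rseq A) (D : nat -> V -> Prop) :
  (forall n u, D n.+1 u -> follow_set (D n) (w n) u) ->
  forall m n u, D (n + m) u -> exists v, D n v /\ spells w n m v.
Proof.
move=> D_step; elim=> [|m IHm] n u; first by rewrite addn0; exists u.
rewrite addnS -addSn => /IHm [v' [/D_step [e [De [le te]]] spells_v']].
by exists (s e); split=> //; exists e; split=> //; rewrite te.
Qed.

Lemma spells_forever_step (w : rseq A) (n : nat) (u : V) :
  (forall m, spells w n m u) ->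
  exists e, [/\ s e = u, L e = w n & forall m, spells w n.+1 m (t e)].
Proof.
move=> spells_u.
have [e spells_e] := @fin_forall_exists_antitone _
  (fun e m => [/\ s e = u, L e = w n & spells w n.+1 m (t e)])
  (fun e m m' le_m'm '(And3 se le spells_e) =>
     And3 se le (spells_antitone le_m'm spells_e))
  (fun m => spells_u m.+1).
by have [se le _] := spells_e 0; exists e; split=> // m; case: (spells_e m).
Qed.

Lemma follower_of_spells (w : rseq A) (v : V) :
  (forall m, spells w 0 m v) -> follower (H := G) v w.
Proof.
pose good n u := forall m, spells w n m u.
move=> good_v.
have [e0 _] := spells_forever_step good_v.
have [next nextP] : exists next : nat * V -> E, forall p,
    good p.1 p.2 -> [/\ s (next p) = p.2, L (next p) = w p.1 & good p.1.+1 (t (next p))].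
  apply: (choice (fun p e =>
    good p.1 p.2 -> [/\ s e = p.2, L e = w p.1 & good p.1.+1 (t e)])) => -[n u].
  case: (classic (good n u)) => [/spells_forever_step [e ?] | bad]; first by exists e.
  by exists e0 => /bad.
pose fix vs n := if n is n'.+1 then t (next (n', vs n')) else v.
have good_vs n : good n (vs n) by elim: n => [|n IHn] //=; case: (nextP (n, vs n)).
exists (fun n => next (n, vs n)).
split; first split=> [|n]; [by case: (nextP (0, v)) | by case: (nextP (n.+1, vs n.+1)) |].
by move=> n; case: (nextP (n, vs n)).
Qed.

Lemma sofic_concat_past (y : Z -> A) (w : rseq A) (v : V) :
  Dy y v -> follower (H := G) v w -> sofic (concat_past y w).
Proof.
move=> [xl [xl_path [xl_lab xl_v]]] [xr [[xr_v xr_path] xr_lab]].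
exists (fun i => if (i <? 0)%Z then xl (Z.to_nat (- i - 1)) else xr (Z.to_nat i)).
split=> i.
- case: (Z.ltb_spec i 0) => i_neg; case: (Z.ltb_spec (i + 1) 0) => i1_neg; try lia.
  + have -> : Z.to_nat (- i - 1) = (Z.to_nat (- (i + 1) - 1)).+1 by lia.
    exact: xl_path.
  + have -> : Z.to_nat (- i - 1) = 0 by lia.
    have -> : Z.to_nat (i + 1) = 0 by lia.
    by rewrite xl_v; exact: esym xr_v.
  + have -> : Z.to_nat (i + 1) = (Z.to_nat i).+1 by lia.
    exact: xr_path.
- rewrite /concat_past; case: Z.ltb_spec => i_neg; last exact: xr_lab.
  by rewrite xl_lab; congr y; lia.
Qed.

Local Notation ulG := (ulG s t L).

Definition ul_vert_of (z : Z -> A) (sofic_z : sofic z) : ul_vert s t L :=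
  exist _ (Dy z) (ex_intro _ z (conj sofic_z erefl)).

Lemma ul_vert_nonempty (d : ul_vert s t L) : exists v, sval d v.
Proof. by case: (svalP d) => z [/Dy_nonempty ? ->]. Qed.

Lemma ul_edge_cond (d d' : ul_vert s t L) (a : A) :
  sval d' = follow_set (sval d) a ->
  (exists v, follow_set (sval d) a v) /\ sval d' = follow_set (sval d) a.
Proof. by move=> d'_eq; split=> //; rewrite -d'_eq; apply: ul_vert_nonempty. Qed.

Definition ul_edge_of (d d' : ul_vert s t L) (a : A)
    (d'_eq : sval d' = follow_set (sval d) a) : ul_edge s t L :=
  exist _ (d, a, d') (ul_edge_cond d'_eq).

Lemma ulG_deterministic (e e' : ledge ulG) :
  lsrc e = lsrc e' -> llab e = llab e' -> ltgt e = ltgt e'.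
Proof.
move=> src_eq lab_eq; apply: sig_eq.
case: (svalP e) => _ ->; case: (svalP e') => _ ->.
by move: src_eq lab_eq => /= -> ->.
Qed.

Lemma future_of_ulG_follower (y : Z -> A) (d : ul_vert s t L) (w : rseq A) :
  sval d = Dy y -> follower (H := ulG) d w -> future y w.
Proof.
move=> d_eq [x [[x0 x_path] x_lab]].
pose D n := sval (lsrc (x n)).
have D0 : D 0 = Dy y by rewrite /D x0.
have D_step n u : D n.+1 u -> follow_set (D n) (w n) u.
  by rewrite /D -x_path x_lab; case: (svalP (x n)) => _ ->.
have [v spells_v] : exists v, forall m, D 0 v /\ spells w 0 m v.
  apply: fin_forall_exists_antitone => [v m m' le_m'm [D0v /(spells_antitone le_m'm)] // | m].
  have [u Dmu] := ul_vert_nonempty (lsrc (x m)).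
  exact: (spells_of_follow_sets D_step (m := m) (n := 0) Dmu).
have [Dv _] := spells_v 0; rewrite D0 in Dv.
apply/futureE/(sofic_concat_past Dv)/follower_of_spells => m.
by case: (spells_v m).
Qed.

Lemma ulG_follower_of_future (y : Z -> A) (d : ul_vert s t L) (w : rseq A) :
  sval d = Dy y -> future y w -> follower (H := ulG) d w.
Proof.
move=> d_eq /futureE; set z := concat_past y w => sofic_z.
pose zn n := ul_vert_of (sofic_shift (Z.of_nat n) sofic_z).
have zn_step n : sval (zn n.+1) = follow_set (sval (zn n)) (w n).
  rewrite /= -(concat_past_nat y w n) -Dy_shift; apply: Dy_eq_past => i _.
  by congr z; lia.
exists (fun n => ul_edge_of (zn_step n)); split=> //; split=> //.
apply: sig_eq; rewrite /= d_eq; apply: Dy_eq_past => i i_neg.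
by rewrite Z.add_0_r /z concat_past_neg.
Qed.

Lemma follower_ulG (y : Z -> A) (d : ul_vert s t L) :
  sval d = Dy y -> follower (H := ulG) d = future y.
Proof.
move=> d_eq; apply: pred_ext => w; split.
- exact: future_of_ulG_follower.
- exact: ulG_follower_of_future.
Qed.

Lemma future_vert_iff (S : rseq A -> Prop) :
  (exists y, sofic y /\ S = future y) <-> exists d : ul_vert s t L, S = follower (H := ulG) d.
Proof.
split=> [[y [sofic_y ->]] | [d ->]].
- by exists (ul_vert_of sofic_y); rewrite (@follower_ulG y (ul_vert_of sofic_y)).
- by case: (svalP d) => y [sofic_y d_eq]; exists y; rewrite (follower_ulG d_eq).
Qed.

Lemma ulG_edge_from_Dy (y : Z -> A) (a : A) :
  sofic y -> (exists w, future y (rcons_seq a w)) ->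
  exists e : ledge ulG, sval (lsrc e) = Dy y /\ llab e = a.
Proof.
move=> sofic_y [w /futureE]; set z := concat_past y (rcons_seq a w) => sofic_z.
have z_step : Dy (fun i => z (i + 1)%Z) = follow_set (Dy y) a.
  have -> : Dy y = Dy z by apply: Dy_eq_past => i i_neg; rewrite /z concat_past_neg.
  exact: Dy_shift.
by exists (ul_edge_of (d := ul_vert_of sofic_y) (d' := ul_vert_of (sofic_shift 1 sofic_z)) z_step).
Qed.

Lemma K_edge_ulG_witness (u u' : K_vert s t L) (a : A) :
  sval u' = (fun w => sval u (rcons_seq a w)) ->
  exists e : ledge ulG,
    follower (lsrc e) = sval u /\ follower (ltgt e) = sval u' /\ llab e = a.
Proof.
move=> u'_eq.
have [y [sofic_y u_eq]] := svalP u.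
have [y' [sofic_y' u'_fut]] := svalP u'.
have [w w_fut] := future_nonempty sofic_y'.
have [e [src_e lab_e]] : exists e : ledge ulG, sval (lsrc e) = Dy y /\ llab e = a.
  apply: ulG_edge_from_Dy sofic_y _; exists w.
  by rewrite -u_eq -[sval u _]/((fun w => sval u (rcons_seq a w)) w) -u'_eq u'_fut.
have src_fol : follower (lsrc e) = sval u by rewrite u_eq; exact: follower_ulG.
exists e; split=> //; split=> //.
by rewrite (follower_cons (@ulG_deterministic)) src_fol lab_e u'_eq.
Qed.

Lemma merged_edge_derivative (k : merged_edge ulG) :
  sval (sval k).2 = (fun w => sval (sval k).1.1 (rcons_seq (sval k).1.2 w)).
Proof. by case: (svalP k) => e [<- [<- <-]]; exact: (follower_cons (@ulG_deterministic) e). Qed.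

Definition K_to_merged (u : K_vert s t L) : merged_vert ulG :=
  exist _ (sval u) (proj1 (future_vert_iff _) (svalP u)).

Definition merged_to_K (m : merged_vert ulG) : K_vert s t L :=
  exist _ (sval m) (proj2 (future_vert_iff _) (svalP m)).

Lemma K_to_mergedK : cancel K_to_merged merged_to_K.
Proof. by move=> u; apply: sig_eq. Qed.

Lemma merged_to_KK : cancel merged_to_K K_to_merged.
Proof. by move=> m; apply: sig_eq. Qed.

Definition K_edge_to_merged (k : K_edge s t L) : merged_edge ulG :=
  exist _ (K_to_merged (sval k).1.1, (sval k).1.2, K_to_merged (sval k).2)
    (K_edge_ulG_witness (svalP k)).

Definition merged_edge_to_K (k : merged_edge ulG) : K_edge s t L :=
  exist _ (merged_to_K (sval k).1.1, (sval k).1.2, merged_to_K (sval k).2)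
    (merged_edge_derivative k).

Lemma K_edge_to_mergedK : cancel K_edge_to_merged merged_edge_to_K.
Proof. by move=> k; apply: sig_eq; rewrite /= !K_to_mergedK; case: (sval k) => [[]]. Qed.

Lemma merged_edge_to_KK : cancel merged_edge_to_K K_edge_to_merged.
Proof. by move=> k; apply: sig_eq; rewrite /= !merged_to_KK; case: (sval k) => [[]]. Qed.

End PresentedShift.

Theorem corollary5p5 (A V E : finType) (s t : E -> V) (L : E -> A)
  (Hsink : no_sinks s) (Hsrc : no_sources t) :
  exists (phiV : lvert (futureCover s t L) -> lvert (merged (ulG s t L)))
         (phiE : ledge (futureCover s t L) -> ledge (merged (ulG s t L))),
    lgraph_iso phiV phiE /\
    forall (y : Z -> A), sofic s t L y ->
    forall (u : lvert (futureCover s t L)) (d : lvert (ulG s t L)),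
      sval u = future s t L y -> sval d = Dy s t L y ->
      sval (phiV u) = follower d.
Proof.
exists (@K_to_merged A V E s t L), (@K_edge_to_merged A V E s t L); split.
- split; first exact: Bijective (@K_to_mergedK _ _ _ s t L) (@merged_to_KK _ _ _ s t L).
  split; first exact: Bijective (@K_edge_to_mergedK _ _ _ s t L) (@merged_edge_to_KK _ _ _ s t L).
  by [].
- by move=> y _ u d u_eq d_eq; rewrite /= u_eq (follower_ulG d_eq).
Qed.
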